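(* With $\theta$ and $\Theta=\theta\vee\widetilde\theta$ as in the context, $c(\Theta)=c(\theta)$.
   Context: $\theta:\mathbb{A}\to\mathbb{A}^\lambda$ is a primitive substitution of constant length $\lambda\ge2$ (some iterate $\theta^k(a)$ contains all letters for each $a$) with $\theta(a_0)_0=a_0$ for some $a_0$, injective on letters, with infinite subshift. Column number of a substitution $\zeta$ over $\mathbb{B}$: $c(\zeta)=\min_{k\ge1,0\le j<\lambda^k}|\{\zeta^k(b)_j:b\in\mathbb{B}\}|$. $\mathcal{X}$ is the set of $M\subset\mathbb{A}$ with $|M|=c(\theta)$ and $M=\{\theta^k(a)_j:a\in\mathbb{A}\}$ for some $k\ge1$, $0\le j<\lambda^k$; $\widetilde\theta(M)_j=\{\theta(a)_j:a\in M\}$. $\overline{\mathcal{X}}=\{(a,M):M\in\mathcal{X},a\in M\}$ and $\Theta:\overline{\mathcal{X}}\to\overline{\mathcal{X}}^\lambda$, $\Theta(a,M)_j=(\theta(a)_j,\widetilde\theta(M)_j)$. *)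

From HB Require Import structures.
From Stdlib Require Import ZArith ClassicalEpsilon ClassicalDescription.
From mathcomp Require Import all_boot.
Set Implicit Arguments. Unset Strict Implicit. Unset Printing Implicit Defensive.

Definition pbool (P : Prop) : bool :=
  if excluded_middle_informative P then true else false.

Section Subst.
Variable B : finType.

(* A substitution zeta : B -> B^lambda is represented as zeta : B -> seq B. *)
Definition iter_word (zeta : B -> seq B) (k : nat) (b : B) : seq B :=
  iter k (fun w => flatten (map zeta w)) [:: b].

Definition letter_at (zeta : B -> seq B) (k j : nat) (b : B) : B :=
  nth b (iter_word zeta k b) j.

Definition column (zeta : B -> seq B) (S : {set B}) (k j : nat) : {set B} :=
  [set letter_at zeta k j b | b in S].

Definition is_column_number (zeta : B -> seq B) (lam : nat) (S : {set B}) (n : nat) : Prop :=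
  (exists k j, 1 <= k /\ j < lam ^ k /\ #|column zeta S k j| = n) /\
  (forall k j, 1 <= k -> j < lam ^ k -> n <= #|column zeta S k j|).

(* column number of zeta over the alphabet S (the minimum always exists) *)
Definition column_number (zeta : B -> seq B) (lam : nat) (S : {set B}) : nat :=
  epsilon (inhabits 0%N) (is_column_number zeta lam S).

Definition subshift (zeta : B -> seq B) (x : Z -> B) : Prop :=
  forall (i : Z) (n : nat), exists k b,
    infix [seq x (i + Z.of_nat m)%Z | m <- iota 0 n] (iter_word zeta k b).

Definition infinite_subshift (zeta : B -> seq B) : Prop :=
  ~ exists (n : nat) (f : 'I_n -> (Z -> B)),
      forall x, subshift zeta x -> exists i, f i = x.

Definition primitive (zeta : B -> seq B) : Prop :=
  forall a, exists k, 1 <= k /\ forall b, b \in iter_word zeta k a.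

End Subst.

Section Theta.
Variable A : finType.
Variables (theta : A -> seq A) (lam : nat).

Definition cTheta : nat := column_number theta lam setT.

Definition calX : {set {set A}} :=
  [set M : {set A} | (#|M| == cTheta) &&
     pbool (exists k j, 1 <= k /\ j < lam ^ k /\ M = column theta setT k j)].

Definition calXbar : {set (A * {set A})} :=
  [set p | (p.2 \in calX) && (p.1 \in p.2)].

Definition theta_tilde_at (M : {set A}) (j : nat) : {set A} :=
  [set nth a (theta a) j | a in M].

Definition Theta (p : A * {set A}) : seq (A * {set A}) :=
  [seq (nth p.1 (theta p.1) j, theta_tilde_at p.2 j) | j <- iota 0 lam].

End Theta.

From mathcomp Require Import all_boot.
From Stdlib Require Import ClassicalEpsilon ClassicalDescription.
Set Implicit Arguments. Unset Strict Implicit. Unset Printing Implicit Defensive.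

(* Since theta^{k'+k}(b)_{j lam^k' + j'} = theta^{k'}(theta^k(b)_j)_{j'}, the letter of
   Theta^k(a, M) at position j is (theta^k(a)_j, column of M at (k, j)).  Fix a column
   N = column theta A (k0, j0) of minimal size c = c(theta); then N lies in X.  Columns of
   sets in X are themselves columns of theta, hence have size >= c; so every column of
   Theta projects onto a set of size >= c, while the column of Theta at (k0, j0) is
   contained in N x {N}, of size c. *)

Lemma pboolP (P : Prop) : reflect P (pbool P).
Proof. by rewrite /pbool; case: excluded_middle_informative => h; constructor. Qed.

Lemma mixed_radix_lt m n j j' : j < m -> j' < n -> j * n + j' < m * n.
Proof.
move=> hj hj'; apply: (@leq_trans (j.+1 * n)); first by rewrite mulSn addnC ltn_add2r.
by rewrite leq_mul2r hj orbT.
Qed.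

Lemma nth_flatten_map_uniform (B C : Type) (g : B -> seq C) (n : nat) (x0 : C) (y0 : B)
    (s : seq B) (j j' : nat) :
  (forall x, size (g x) = n) -> j < size s -> j' < n ->
  nth x0 (flatten (map g s)) (j * n + j') = nth x0 (g (nth y0 s j)) j'.
Proof.
move=> hg; elim: s j => [|x s IH] [|j] //= hj hj'.
  by rewrite mul0n add0n nth_cat hg hj'.
by rewrite nth_cat hg mulSn -addnA ltnNge leq_addr /= addKn IH.
Qed.

Section ConstantLength.
Variable B : finType.
Variables (zeta : B -> seq B) (lam : nat).
Hypothesis size_zeta : forall b, size (zeta b) = lam.

Lemma size_iter_word k b : size (iter_word zeta k b) = lam ^ k.
Proof.
rewrite /iter_word; elim: k => [|k IH] //=.
rewrite size_flatten /shape -map_comp expnS mulnC -IH.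
by elim: (iter _ _ _) => [|x s IHs] //=; rewrite /= size_zeta IHs.
Qed.

Lemma iter_wordD k k' b :
  iter_word zeta (k' + k) b = flatten (map (iter_word zeta k') (iter_word zeta k b)).
Proof.
rewrite /iter_word iterD; elim: k' => [|k' IH] /=.
  by elim: (iter _ _ _) => [|x s IHs] //=; rewrite -IHs.
rewrite IH; elim: (iter _ _ _) => [|x s IHs] //=.
by rewrite map_cat flatten_cat IHs.
Qed.

Lemma letter_atD k k' j j' b : j < lam ^ k -> j' < lam ^ k' ->
  letter_at zeta (k' + k) (j * lam ^ k' + j') b =
  letter_at zeta k' j' (letter_at zeta k j b).
Proof.
move=> hj hj'; rewrite /letter_at iter_wordD.
rewrite (nth_flatten_map_uniform b b (n := lam ^ k')) ?size_iter_word //.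
  by apply: set_nth_default; rewrite size_iter_word.
by move=> x; rewrite size_iter_word.
Qed.

Lemma letter_at1 j b : letter_at zeta 1 j b = nth b (zeta b) j.
Proof. by rewrite /letter_at /iter_word /= cats0. Qed.

Lemma columnD S k k' j j' : j < lam ^ k -> j' < lam ^ k' ->
  column zeta (column zeta S k j) k' j' = column zeta S (k' + k) (j * lam ^ k' + j').
Proof.
move=> hj hj'; rewrite /column -imset_comp.
by apply: eq_imset => b /=; rewrite letter_atD.
Qed.

Lemma is_column_number_unique S n n' :
  is_column_number zeta lam S n -> is_column_number zeta lam S n' -> n = n'.
Proof.
move=> [[k [j [hk [hj <-]]]] min_n] [[k' [j' [hk' [hj' <-]]]] min_n'].
by apply/eqP; rewrite eqn_leq min_n ?min_n'.
Qed.

Lemma column_number_spec S : 0 < lam ->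
  is_column_number zeta lam S (column_number zeta lam S).
Proof.
move=> lam_gt0; rewrite /column_number; apply: epsilon_spec.
pose P n := pbool (exists k j, 1 <= k /\ j < lam ^ k /\ #|column zeta S k j| = n).
have exP : exists n, P n.
  by exists #|column zeta S 1 0|; apply/pboolP; exists 1, 0; rewrite expn1.
case: (ex_minnP exP) => n /pboolP hn min_n.
by exists n; split => // k j hk hj; apply: min_n; apply/pboolP; exists k, j.
Qed.

Lemma column_number_eq S n : 0 < lam ->
  is_column_number zeta lam S n -> column_number zeta lam S = n.
Proof. by move=> /(column_number_spec S); apply: is_column_number_unique. Qed.

End ConstantLength.

Section SkewProduct.
Variable A : finType.
Variables (theta : A -> seq A) (lam : nat).
Hypothesis size_theta : forall a, size (theta a) = lam.
Hypothesis lam_gt0 : 0 < lam.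

Local Notation c := (cTheta theta lam).
Local Notation X := (calX theta lam).
Local Notation Xbar := (calXbar theta lam).
Local Notation Theta := (Theta theta lam).

Lemma size_Theta p : size (Theta p) = lam.
Proof. by rewrite /Theta size_map size_iota. Qed.

Lemma letter_Theta k j p : j < lam ^ k ->
  letter_at Theta k j p = (letter_at theta k j p.1, column theta p.2 k j).
Proof.
elim: k j p => [|k IH] j [a M].
  rewrite expn0 ltnS leqn0 => /eqP ->.
  by rewrite /letter_at /column /=; congr (_, _); apply/setP => x; rewrite imset_id.
move=> hj.
have hq : j %/ lam < lam ^ k by rewrite ltn_divLR // -expnSr.
have hr : j %% lam < lam ^ 1 by rewrite expn1 ltn_mod.
rewrite (divn_eq j lam) -{1 4}(expn1 lam) -addn1 addnC.
rewrite (letter_atD size_Theta _ hq hr) IH // letter_at1 /Theta.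
rewrite (nth_map 0) ?size_iota -?expn1 // nth_iota -?expn1 //= add0n.
rewrite (letter_atD size_theta _ hq hr) letter_at1; congr (_, _).
rewrite /theta_tilde_at /column -imset_comp; apply: eq_imset => b /=.
by rewrite (letter_atD size_theta _ hq hr) letter_at1.
Qed.

Lemma cTheta_le_column k j : 1 <= k -> j < lam ^ k -> c <= #|column theta setT k j|.
Proof. by case: (column_number_spec theta setT lam_gt0) => _; apply. Qed.

Lemma cTheta_le_column_calX M k j : M \in X -> 1 <= k -> j < lam ^ k ->
  c <= #|column theta M k j|.
Proof.
rewrite inE => /andP [_ /pboolP [k1 [j1 [hk1 [hj1 ->]]]]] hk hj.
rewrite (columnD size_theta) // cTheta_le_column ?(leq_trans hk1) ?leq_addl //.
by rewrite expnD [lam ^ k * _]mulnC mixed_radix_lt.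
Qed.

Lemma minimal_column_calX k j : 1 <= k -> j < lam ^ k ->
  #|column theta setT k j| = c -> column theta setT k j \in X.
Proof. by move=> hk hj hN; rewrite inE hN eqxx; apply/pboolP; exists k, j. Qed.

Lemma column_Theta_fst M k j : M \in X -> 1 <= k -> j < lam ^ k ->
  column theta M k j \subset [set q.1 | q in column Theta Xbar k j].
Proof.
move=> MX hk hj; apply/subsetP => _ /imsetP [a aM ->].
apply/imsetP; exists (letter_at Theta k j (a, M)); last by rewrite letter_Theta.
by apply: imset_f; rewrite inE MX aM.
Qed.

Lemma column_Theta_minimal k j : 1 <= k -> j < lam ^ k ->
  #|column theta setT k j| = c ->
  column Theta Xbar k j \subset [set (b, column theta setT k j) | b in column theta setT k j].
Proof.
move=> hk hj hN; set N := column theta setT k j.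
apply/subsetP => _ /imsetP [[a M] /[1!inE] /andP [MX aM] ->].
have columnM : column theta M k j = N.
  apply/eqP; rewrite eqEcard imsetS ?subsetT //= hN.
  exact: cTheta_le_column_calX.
rewrite letter_Theta //= columnM imset_f // -columnM.
exact: imset_f.
Qed.

Lemma is_column_number_Theta : is_column_number Theta lam Xbar c.
Proof.
case: (column_number_spec theta setT lam_gt0) => [[k0 [j0 [hk0 [hj0 hN]]]] _].
rewrite -/(cTheta theta lam) in hN; set N := column theta setT k0 j0 in hN.
have NX : N \in X by apply: minimal_column_calX.
have c_le_Theta k j : 1 <= k -> j < lam ^ k -> c <= #|column Theta Xbar k j|.
  move=> hk hj; apply: leq_trans (cTheta_le_column_calX NX hk hj) _.
  exact: leq_trans (subset_leq_card (column_Theta_fst NX hk hj)) (leq_imset_card _ _).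
split=> //; exists k0, j0; do 2!split=> //.
apply/eqP; rewrite eqn_leq c_le_Theta // andbT -hN.
exact: leq_trans (subset_leq_card (column_Theta_minimal hk0 hj0 hN)) (leq_imset_card _ _).
Qed.

End SkewProduct.

Theorem mainTheorem14 (A : finType) (lam : nat) (theta : A -> seq A)
  (hlam : 2 <= lam)
  (hsize : forall a, size (theta a) = lam)
  (hprim : primitive theta)
  (ha0 : exists a0, nth a0 (theta a0) 0 = a0)
  (hinj : injective theta)
  (hinf : infinite_subshift theta) :
  column_number (Theta theta lam) lam (calXbar theta lam) = cTheta theta lam.
Proof.
have lam_gt0 : 0 < lam by apply: leq_trans hlam.
exact: column_number_eq lam_gt0 (is_column_number_Theta hsize lam_gt0).
Qed.
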